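(* Let $m\ge 1$ and $n \ge 2m-2$ be integers. Then for every real $r$ with $|r|>1$, $$\int_{-1}^1 \frac{U_n(s)(1-s^2)^{m-\frac{1}{2}}}{s-r}\,ds = \pi(-1)^{m}(r^2-1)^{m-1}\left(r-\frac{|r|}{r}\sqrt{r^2-1}\right)^{n+1}.$$
   Context: $U_k(s)=\frac{\sin((k+1)\cos^{-1}s)}{\sin(\cos^{-1}s)}$ is the Tchebyshev polynomial of the second kind. Since $|r|>1$, the integrand has no singularity on $[-1,1]$ and the integral is an ordinary integral. *)

From Stdlib Require Import Reals Lra Lia.
From Coquelicot Require Import Coquelicot.
Open Scope R_scope.

(* On (-1,1) this agrees with
   sin((k+1) acos s) / sin(acos s), the formula in the paper (which is
   undefined only at s = +-1, irrelevant for the integral). *)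
Fixpoint chebU_aux (k : nat) (s : R) : R * R :=
  (* returns (U_k s, U_{k+1} s) *)
  match k with
  | O => (1, 2 * s)
  | S k' => let p := chebU_aux k' s in (snd p, 2 * s * snd p - fst p)
  end.

Definition chebU (k : nat) (s : R) : R := fst (chebU_aux k s).

From Stdlib Require Import Reals Lra Lia.
From Coquelicot Require Import Coquelicot.
Open Scope R_scope.

(* Substituting s = cos t and using U_n(cos t) sin t = sin((n+1)t), the integral becomes
   the integral over [0, pi] of sin((n+1)t) sin t (1 - cos^2 t)^(m-1) / (cos t - r).
   Write (1 - c^2)^(m-1) = (1 - r^2)^(m-1) + (c - r) Q(c) with deg Q < 2m - 2 <= n.
   Since 2 sin((n+1)t) sin t = cos(nt) - cos((n+2)t) and cos(jt) is orthogonal on [0, pi]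
   to every polynomial in cos t of degree < j, the Q part integrates to 0, leaving
   (1 - r^2)^(m-1) (L_n - L_(n+2)) / 2 with L_n = int_0^pi cos(nt) / (cos t - r) dt.
   The L_n are bounded and satisfy L_(n+2) - 2r L_(n+1) + L_n = 0, so they are geometric
   with ratio the root x = r - sgn(r) sqrt(r^2 - 1) of x^2 - 2rx + 1 inside the unit
   disk: L_n = pi x^n / (x - r). *)

Lemma is_RInt_cos_nat_mult (j : nat) :
  (1 <= j)%nat -> is_RInt (fun t => cos (INR j * t)) 0 PI 0.
Proof.
  intros Hj.
  assert (Hj0 : INR j <> 0) by (apply not_0_INR; lia).
  assert (Hsin : sin (INR j * PI) = 0).
  { apply sin_eq_0_1. exists (Z.of_nat j). rewrite <- INR_IZR_INZ. reflexivity. }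
  assert (H : is_RInt (fun t => cos (INR j * t)) 0 PI
                (minus (sin (INR j * PI) / INR j) (sin (INR j * 0) / INR j))).
  { apply (is_RInt_derive (fun t => sin (INR j * t) / INR j)).
    - intros t _. auto_derive; [easy | field; easy].
    - intros t _. apply (ex_derive_continuous (fun t => cos (INR j * t))).
      auto_derive. easy. }
  replace (minus _ _) with 0 in H; [exact H |].
  rewrite Hsin, Rmult_0_r, sin_0. unfold minus, plus, opp; simpl. field. easy.
Qed.

Lemma cos_nat_mult_add_sub (n : nat) (t : R) :
  cos (INR (S (S n)) * t) + cos (INR n * t) = 2 * cos t * cos (INR (S n) * t).
Proof.
  rewrite !S_INR.
  replace ((INR n + 1 + 1) * t) with ((INR n + 1) * t + t) by ring.
  replace (INR n * t) with ((INR n + 1) * t - t) by ring.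
  rewrite cos_plus, cos_minus. ring.
Qed.

Lemma bounded_mul_pow_const_eq_0 (u : nat -> R) (x C : R) :
  Rabs x < 1 -> (forall n, Rabs (u n) <= C) ->
  (forall n, u n * x ^ n = u 0%nat) -> u 0%nat = 0.
Proof.
  intros Hx HC Hu.
  destruct (Req_dec (u 0%nat) 0) as [| Hu0]; [easy | exfalso].
  assert (Hpos : 0 < Rabs (u 0%nat)) by (apply Rabs_pos_lt; easy).
  assert (HC0 : 0 <= C) by (pose proof (HC 0%nat); lra).
  set (y := Rabs (u 0%nat) / (C + 1)).
  assert (Hy : Rabs (u 0%nat) = (C + 1) * y) by (unfold y; field; lra).
  destruct (pow_lt_1_zero x Hx y) as [N HN]; [unfold y; apply Rdiv_lt_0_compat; lra |].
  specialize (HN N (Nat.le_refl N)).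
  pose proof (HC N). pose proof (Rabs_pos (x ^ N)).
  assert (Hbound : Rabs (u 0%nat) <= C * Rabs (x ^ N)).
  { rewrite <- (Hu N), Rabs_mult. apply Rmult_le_compat_r; lra. }
  nra.
Qed.

Lemma Rabs_gt_1_sq (r : R) : 1 < Rabs r -> 1 < r ^ 2.
Proof. unfold Rabs. destruct (Rcase_abs r); nra. Qed.

Lemma root_sub_neq_0 (r x : R) : 1 < Rabs r -> x ^ 2 - 2 * r * x + 1 = 0 -> x - r <> 0.
Proof.
  intros Hr Hroot E. pose proof (Rabs_gt_1_sq r Hr).
  replace x with r in Hroot by lra. nra.
Qed.

Section CosKernel.

Variable r : R.
Hypothesis Hr : 1 < Rabs r.

Definition cos_kernel (n : nat) (t : R) : R := cos (INR n * t) / (cos t - r).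

Definition cos_kernel_int (n : nat) : R := RInt (cos_kernel n) 0 PI.

Lemma Rabs_cos_sub_ge (t : R) : Rabs r - 1 <= Rabs (cos t - r).
Proof.
  pose proof (COS_bound t).
  unfold Rabs in *; destruct (Rcase_abs r), (Rcase_abs (cos t - r)); lra.
Qed.

Lemma cos_sub_neq_0 (t : R) : cos t - r <> 0.
Proof.
  intros E. pose proof (Rabs_cos_sub_ge t). rewrite E, Rabs_R0 in H. lra.
Qed.

Lemma is_RInt_cos_kernel (n : nat) : is_RInt (cos_kernel n) 0 PI (cos_kernel_int n).
Proof.
  apply (RInt_correct (V := R_CompleteNormedModule)).
  apply (ex_RInt_continuous (V := R_CompleteNormedModule)). intros t _.
  apply (ex_derive_continuous (cos_kernel n)). unfold cos_kernel.
  auto_derive. apply cos_sub_neq_0.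
Qed.

Lemma cos_kernel_rec (n : nat) (t : R) :
  cos_kernel (S (S n)) t + cos_kernel n t
  = 2 * cos (INR (S n) * t) + 2 * r * cos_kernel (S n) t.
Proof.
  unfold cos_kernel. pose proof (cos_sub_neq_0 t).
  rewrite <- Rdiv_plus_distr, cos_nat_mult_add_sub. field. easy.
Qed.

Lemma cos_kernel_int_rec (n : nat) :
  cos_kernel_int (S (S n)) + cos_kernel_int n = 2 * r * cos_kernel_int (S n).
Proof.
  assert (H : is_RInt (fun t => cos_kernel (S (S n)) t + cos_kernel n t) 0 PI
                (2 * 0 + 2 * r * cos_kernel_int (S n))).
  { eapply is_RInt_ext; cycle 1.
    - apply (is_RInt_plus (fun t => 2 * cos (INR (S n) * t))
                          (fun t => 2 * r * cos_kernel (S n) t)).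
      + apply (is_RInt_scal (fun t => cos (INR (S n) * t))), is_RInt_cos_nat_mult. lia.
      + apply (is_RInt_scal (cos_kernel (S n))), is_RInt_cos_kernel.
    - intros t _. symmetry. apply cos_kernel_rec. }
  assert (H' : is_RInt (fun t => cos_kernel (S (S n)) t + cos_kernel n t) 0 PI
                 (cos_kernel_int (S (S n)) + cos_kernel_int n)).
  { apply (is_RInt_plus (cos_kernel (S (S n))) (cos_kernel n)); apply is_RInt_cos_kernel. }
  pose proof (is_RInt_unique _ _ _ _ H). pose proof (is_RInt_unique _ _ _ _ H'). lra.
Qed.

Lemma cos_kernel_1 (t : R) : cos_kernel 1 t = 1 + r * cos_kernel 0 t.
Proof.
  unfold cos_kernel. pose proof (cos_sub_neq_0 t).
  rewrite Rmult_1_l, Rmult_0_l, cos_0. field. easy.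
Qed.

Lemma cos_kernel_int_1 : cos_kernel_int 1 = PI + r * cos_kernel_int 0.
Proof.
  assert (H : is_RInt (cos_kernel 1) 0 PI ((PI - 0) * 1 + r * cos_kernel_int 0)).
  { eapply is_RInt_ext; cycle 1.
    - apply (is_RInt_plus (fun _ => 1) (fun t => r * cos_kernel 0 t)).
      + apply (is_RInt_const (V := R_NormedModule)).
      + apply (is_RInt_scal (cos_kernel 0)), is_RInt_cos_kernel.
    - intros t _. symmetry. apply cos_kernel_1. }
  unfold cos_kernel_int at 1. rewrite (is_RInt_unique _ _ _ _ H). ring.
Qed.

Lemma cos_kernel_int_bound (n : nat) : Rabs (cos_kernel_int n) <= PI / (Rabs r - 1).
Proof.
  pose proof PI_RGT_0.
  replace (PI / (Rabs r - 1)) with ((PI - 0) * / (Rabs r - 1)) by (unfold Rdiv; ring).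
  apply abs_RInt_le_const; [lra | eexists; apply is_RInt_cos_kernel |].
  intros t _. unfold cos_kernel, Rdiv.
  pose proof (Rabs_cos_sub_ge t).
  rewrite Rabs_mult, Rabs_inv, <- (Rmult_1_l (/ (Rabs r - 1))).
  apply Rmult_le_compat; [apply Rabs_pos | left; apply Rinv_0_lt_compat; lra | |].
  - apply Rabs_le, COS_bound.
  - apply Rinv_le_contravar; lra.
Qed.

Lemma cos_kernel_int_closed (x : R) (n : nat) :
  x ^ 2 - 2 * r * x + 1 = 0 -> Rabs x < 1 -> cos_kernel_int n = PI * x ^ n / (x - r).
Proof.
  intros Hroot Hx.
  assert (Hx0 : x <> 0) by (intros ->; lra).
  pose proof (root_sub_neq_0 r x Hr Hroot) as Hxr.
  set (D k := cos_kernel_int (S k) - x * cos_kernel_int k).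
  assert (HD : forall k, D k * x ^ k = D 0%nat).
  { assert (Hstep : forall k, D (S k) * x = D k).
    { intros k. unfold D.
      rewrite <- (Rplus_minus_r (cos_kernel_int (S (S k))) (cos_kernel_int k)),
        cos_kernel_int_rec.
      transitivity (cos_kernel_int (S k) - x * cos_kernel_int k
                    - cos_kernel_int (S k) * (x ^ 2 - 2 * r * x + 1)); [ring |].
      rewrite Hroot. ring. }
    induction k as [| k IH]; [simpl; ring |].
    rewrite <- IH, <- (Hstep k). simpl. ring. }
  assert (HD0 : D 0%nat = 0).
  { apply (bounded_mul_pow_const_eq_0 D x (2 * (PI / (Rabs r - 1)))); [easy | | easy].
    intros k. unfold D.
    pose proof (cos_kernel_int_bound k). pose proof (cos_kernel_int_bound (S k)).
    pose proof (Rmult_le_compat_r _ _ _ (Rabs_pos (cos_kernel_int k)) (Rlt_le _ _ Hx)).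
    unfold Rminus at 1. eapply Rle_trans; [apply Rabs_triang |].
    rewrite Rabs_Ropp, Rabs_mult. lra. }
  assert (Hgeom : forall k, cos_kernel_int (S k) = x * cos_kernel_int k).
  { intros k. pose proof (HD k) as E. rewrite HD0 in E.
    apply Rmult_integral in E as [E | E]; [unfold D in E; lra |].
    exfalso. revert E. apply pow_nonzero, Hx0. }
  assert (H0 : cos_kernel_int 0 = PI / (x - r)).
  { pose proof cos_kernel_int_1 as E. rewrite Hgeom in E.
    apply Rmult_eq_reg_r with (x - r); [| easy]. unfold Rdiv.
    rewrite Rmult_assoc, Rinv_l; lra. }
  induction n as [| n IH].
  - rewrite H0. unfold Rdiv. ring.
  - rewrite Hgeom, IH. unfold Rdiv. simpl. ring.
Qed.

Lemma cos_kernel_int_sub_SS (x : R) (n : nat) :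
  x ^ 2 - 2 * r * x + 1 = 0 -> Rabs x < 1 ->
  cos_kernel_int n - cos_kernel_int (S (S n)) = - 2 * PI * x ^ S n.
Proof.
  intros Hroot Hx. pose proof (root_sub_neq_0 r x Hr Hroot) as Hxr.
  rewrite !(cos_kernel_int_closed x) by easy.
  transitivity (PI * x ^ n * (1 - x ^ 2) / (x - r)); [simpl; field; easy |].
  replace (1 - x ^ 2) with (- 2 * x * (x - r) + (x ^ 2 - 2 * r * x + 1)) by ring.
  rewrite Hroot. simpl. field. easy.
Qed.

End CosKernel.

Lemma chebU_aux_cos_mul_sin (k : nat) (t : R) :
  fst (chebU_aux k (cos t)) * sin t = sin (INR (S k) * t) /\
  snd (chebU_aux k (cos t)) * sin t = sin (INR (S (S k)) * t).
Proof.
  induction k as [| k [IH1 IH2]].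
  - simpl. replace ((1 + 1) * t) with (2 * t) by ring.
    rewrite Rmult_1_l, Rmult_1_l, sin_2a. split; ring.
  - cbn [chebU_aux fst snd]. split; [easy |].
    replace (INR (S (S (S k))) * t) with (INR (S (S k)) * t + t) by (rewrite !S_INR; ring).
    replace (INR (S k) * t) with (INR (S (S k)) * t - t) in IH1 by (rewrite !S_INR; ring).
    set (a := INR (S (S k)) * t) in *.
    rewrite sin_minus in IH1. rewrite sin_plus, Rmult_minus_distr_r, !Rmult_assoc, IH2, IH1.
    ring.
Qed.

Lemma chebU_cos_mul_sin (k : nat) (t : R) : chebU k (cos t) * sin t = sin (INR (S k) * t).
Proof. apply chebU_aux_cos_mul_sin. Qed.

Lemma ex_derive_chebU_aux (k : nat) (s : R) :
  ex_derive (fun s => fst (chebU_aux k s)) s /\ ex_derive (fun s => snd (chebU_aux k s)) s.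
Proof.
  revert s. induction k as [| k IH]; intros s.
  - simpl. split; auto_derive; easy.
  - cbn [chebU_aux fst snd]. split; [apply IH |].
    apply (ex_derive_minus (fun s => 2 * s * snd (chebU_aux k s))); [| apply IH].
    apply (ex_derive_mult (fun s => 2 * s)); [auto_derive; easy | apply IH].
Qed.

Lemma continuous_chebU (k : nat) (s : R) : continuous (chebU k) s.
Proof. apply (ex_derive_continuous (chebU k)), (ex_derive_chebU_aux k s). Qed.

Inductive poly_deg_lt : nat -> (R -> R) -> Prop :=
  | poly_deg_lt_zero d : poly_deg_lt d (fun _ => 0)
  | poly_deg_lt_const c : poly_deg_lt 1 (fun _ => c)
  | poly_deg_lt_add d p q :
      poly_deg_lt d p -> poly_deg_lt d q -> poly_deg_lt d (fun s => p s + q s)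
  | poly_deg_lt_scal d c p : poly_deg_lt d p -> poly_deg_lt d (fun s => c * p s)
  | poly_deg_lt_mulX d p : poly_deg_lt d p -> poly_deg_lt (S d) (fun s => s * p s)
  | poly_deg_lt_mono d e p : (d <= e)%nat -> poly_deg_lt d p -> poly_deg_lt e p
  | poly_deg_lt_ext d p q : (forall s, p s = q s) -> poly_deg_lt d p -> poly_deg_lt d q.

Lemma is_RInt_0 (a b : R) : is_RInt (fun _ => 0) a b 0.
Proof.
  pose proof (is_RInt_const (V := R_NormedModule) a b 0) as H.
  change (scal (b - a) 0) with ((b - a) * 0) in H. rewrite Rmult_0_r in H. exact H.
Qed.

Lemma is_RInt_cos_nat_mult_poly_cos (d j : nat) (q : R -> R) :
  poly_deg_lt d q -> (d <= j)%nat ->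
  is_RInt (fun t => cos (INR j * t) * q (cos t)) 0 PI 0.
Proof.
  intros Hq. revert j. induction Hq as [d | c | d p q _ IHp _ IHq | d c p _ IHp
    | d p _ IHp | d e p Hde _ IHp | d p q Hpq _ IHp]; intros j Hj.
  - apply (is_RInt_ext (fun _ => 0)); [intros t _; simpl; ring |].
    apply is_RInt_0.
  - assert (H : is_RInt (fun t => c * cos (INR j * t)) 0 PI (c * 0)).
    { apply (is_RInt_scal (fun t => cos (INR j * t))), is_RInt_cos_nat_mult. lia. }
    rewrite Rmult_0_r in H.
    refine (is_RInt_ext _ _ _ _ _ _ H). intros t _. simpl. ring.
  - assert (H : is_RInt (fun t => cos (INR j * t) * p (cos t) + cos (INR j * t) * q (cos t))
                  0 PI (0 + 0)).
    { apply (is_RInt_plus (fun t => cos (INR j * t) * p (cos t)));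
        [apply IHp | apply IHq]; easy. }
    rewrite Rplus_0_r in H.
    refine (is_RInt_ext _ _ _ _ _ _ H). intros t _. simpl. ring.
  - assert (H : is_RInt (fun t => c * (cos (INR j * t) * p (cos t))) 0 PI (c * 0)).
    { apply (is_RInt_scal (fun t => cos (INR j * t) * p (cos t))), IHp. easy. }
    rewrite Rmult_0_r in H.
    refine (is_RInt_ext _ _ _ _ _ _ H). intros t _. simpl. ring.
  - (* [2 cos t cos((j+1)t) = cos((j+2)t) + cos(jt)] trades the factor [cos t] for indices
       that still exceed the degree of [p]. *)
    destruct j as [| j]; [lia |].
    assert (H : is_RInt (fun t => / 2 * (cos (INR (S (S j)) * t) * p (cos t))
                                  + / 2 * (cos (INR j * t) * p (cos t))) 0 PI (/ 2 * 0 + / 2 * 0)).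
    { apply (is_RInt_plus (fun t => / 2 * (cos (INR (S (S j)) * t) * p (cos t))));
        apply (is_RInt_scal (fun t => _ * p (cos t))), IHp; lia. }
    rewrite Rmult_0_r, Rplus_0_r in H.
    refine (is_RInt_ext _ _ _ _ _ _ H). intros t _.
    rewrite <- Rmult_plus_distr_l, <- Rmult_plus_distr_r, cos_nat_mult_add_sub.
    simpl. field.
  - apply IHp. lia.
  - apply (is_RInt_ext (fun t => cos (INR j * t) * p (cos t))).
    + intros t _. simpl. rewrite Hpq. ring.
    + now apply IHp.
Qed.

Fixpoint divdiff_pow_one_sub_sq (r : R) (k : nat) (c : R) : R :=
  match k with
  | O => 0
  | S k => (1 - c ^ 2) * divdiff_pow_one_sub_sq r k c - (1 - r ^ 2) ^ k * (c + r)
  end.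

Lemma pow_one_sub_sq_split (r c : R) (k : nat) :
  (1 - c ^ 2) ^ k = (1 - r ^ 2) ^ k + (c - r) * divdiff_pow_one_sub_sq r k c.
Proof.
  induction k as [| k IH]; [simpl; ring |].
  rewrite <- (tech_pow_Rmult (1 - c ^ 2)), <- (tech_pow_Rmult (1 - r ^ 2)), IH.
  cbn [divdiff_pow_one_sub_sq]. ring.
Qed.

Lemma poly_deg_lt_divdiff_pow_one_sub_sq (r : R) (k : nat) :
  poly_deg_lt (2 * k) (divdiff_pow_one_sub_sq r k).
Proof.
  induction k as [| k IH]; [apply poly_deg_lt_zero |]. cbn [divdiff_pow_one_sub_sq].
  apply poly_deg_lt_add.
  - apply (poly_deg_lt_ext _ (fun c => divdiff_pow_one_sub_sq r k c
             + -1 * (c * (c * divdiff_pow_one_sub_sq r k c)))); [intros c; ring |].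
    apply poly_deg_lt_add; [apply (poly_deg_lt_mono (2 * k)); [lia | easy] |].
    apply poly_deg_lt_scal. replace (2 * S k)%nat with (S (S (2 * k))) by lia.
    now apply poly_deg_lt_mulX, poly_deg_lt_mulX.
  - apply (poly_deg_lt_ext _ (fun c => - (1 - r ^ 2) ^ k * (c * 1 + r))); [intros c; ring |].
    apply poly_deg_lt_scal, (poly_deg_lt_mono 2); [lia |].
    apply poly_deg_lt_add; [apply poly_deg_lt_mulX, poly_deg_lt_const |].
    apply (poly_deg_lt_mono 1); [lia | apply poly_deg_lt_const].
Qed.

Lemma is_RInt_cos_subst (f : R -> R) (I : R) :
  (forall s, -1 <= s <= 1 -> continuous f s) ->
  is_RInt (fun t => sin t * f (cos t)) 0 PI I -> is_RInt f (-1) 1 I.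
Proof.
  intros Hf H.
  assert (Hsubst : is_RInt (fun t => - sin t * f (cos t)) PI 0 (RInt f (cos PI) (cos 0))).
  { apply (is_RInt_comp f cos (fun t => - sin t)).
    - intros t _. apply Hf, COS_bound.
    - intros t _. split; [auto_derive; [easy | ring] |].
      apply (ex_derive_continuous (fun t => - sin t)). auto_derive. easy. }
  rewrite cos_PI, cos_0 in Hsubst. apply is_RInt_swap in Hsubst.
  assert (Hneg : is_RInt (fun t => - sin t * f (cos t)) 0 PI (- I)).
  { apply (is_RInt_ext (fun t => - (sin t * f (cos t)))); [intros t _; simpl; ring |].
    apply (is_RInt_opp (fun t => sin t * f (cos t))), H. }
  assert (E : opp (RInt f (-1) 1) = - I).
  { rewrite <- (is_RInt_unique _ _ _ _ Hneg). apply eq_sym, is_RInt_unique, Hsubst. }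
  change (opp (RInt f (-1) 1)) with (- RInt f (-1) 1) in E.
  replace I with (RInt f (-1) 1) by lra.
  apply (RInt_correct (V := R_CompleteNormedModule)),
    (ex_RInt_continuous (V := R_CompleteNormedModule)).
  intros s Hs. rewrite Rmin_left, Rmax_right in Hs by lra. now apply Hf.
Qed.

Definition inner_root (r : R) : R := r - Rabs r / r * sqrt (r ^ 2 - 1).

Lemma inner_root_spec (r : R) : 1 < Rabs r ->
  inner_root r ^ 2 - 2 * r * inner_root r + 1 = 0 /\ Rabs (inner_root r) < 1.
Proof.
  intros Hr. pose proof (Rabs_gt_1_sq r Hr) as Hr2.
  assert (HS : sqrt (r ^ 2 - 1) * sqrt (r ^ 2 - 1) = r ^ 2 - 1) by (apply sqrt_sqrt; lra).
  assert (HS0 : 0 < sqrt (r ^ 2 - 1)) by (apply sqrt_lt_R0; lra).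
  unfold inner_root. set (S := sqrt (r ^ 2 - 1)) in *.
  unfold Rabs in *. destruct (Rcase_abs r) as [Hneg | Hpos].
  - replace (- r / r) with (-1) by (field; lra).
    split; [nra |]. destruct (Rcase_abs (r - -1 * S)); nra.
  - replace (r / r) with 1 by (field; lra).
    split; [nra |]. destruct (Rcase_abs (r - 1 * S)); nra.
Qed.

Definition chebU_weighted_cauchy (k n : nat) (r s : R) : R :=
  chebU n s * ((1 - s ^ 2) ^ k * sqrt (1 - s ^ 2)) / (s - r).

Lemma continuous_chebU_weighted_cauchy (k n : nat) (r s : R) :
  1 < Rabs r -> -1 <= s <= 1 -> continuous (chebU_weighted_cauchy k n r) s.
Proof.
  intros Hr Hs.
  assert (Hsr : s - r <> 0) by (unfold Rabs in Hr; destruct (Rcase_abs r); lra).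
  apply (continuous_mult (K := R_AbsRing) (fun s => chebU n s * _) (fun s => / (s - r))).
  - apply (continuous_mult (K := R_AbsRing) (chebU n)); [apply continuous_chebU |].
    apply (continuous_mult (K := R_AbsRing) (fun s => (1 - s ^ 2) ^ k)).
    + apply (ex_derive_continuous (fun s => (1 - s ^ 2) ^ k)). auto_derive. easy.
    + apply continuous_sqrt_comp, (ex_derive_continuous (fun s => 1 - s ^ 2)).
      auto_derive. easy.
  - apply (ex_derive_continuous (fun s => / (s - r))). auto_derive. easy.
Qed.

Lemma sqrt_one_sub_cos_sq (t : R) : 0 <= t <= PI -> sqrt (1 - cos t ^ 2) = sin t.
Proof.
  intros Ht. rewrite <- Rsqr_pow2. symmetry.
  apply Rtrigo_facts.sin_cos, Rle_ge, sin_ge_0; lra.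
Qed.

Lemma sin_S_mul_sin (n : nat) (t : R) :
  sin (INR (S n) * t) * sin t = (cos (INR n * t) - cos (INR (S (S n)) * t)) / 2.
Proof.
  replace (INR (S (S n)) * t) with (INR (S n) * t + t) by (rewrite !S_INR; ring).
  replace (INR n * t) with (INR (S n) * t - t) by (rewrite !S_INR; ring).
  set (a := INR (S n) * t). rewrite cos_plus, cos_minus. field.
Qed.

Lemma sin_mul_chebU_weighted_cauchy_cos (k n : nat) (r t : R) :
  1 < Rabs r -> 0 <= t <= PI ->
  sin t * chebU_weighted_cauchy k n r (cos t)
  = (1 - r ^ 2) ^ k / 2 * (cos_kernel r n t - cos_kernel r (S (S n)) t)
    + (cos (INR n * t) - cos (INR (S (S n)) * t)) / 2 * divdiff_pow_one_sub_sq r k (cos t).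
Proof.
  intros Hr Ht. pose proof (cos_sub_neq_0 r Hr t).
  unfold chebU_weighted_cauchy, cos_kernel.
  rewrite sqrt_one_sub_cos_sq, (pow_one_sub_sq_split r) by easy.
  transitivity (chebU n (cos t) * sin t * sin t
                * (((1 - r ^ 2) ^ k + (cos t - r) * divdiff_pow_one_sub_sq r k (cos t))
                   / (cos t - r))); [field; easy |].
  rewrite chebU_cos_mul_sin, sin_S_mul_sin.
  set (a := cos (INR n * t)). set (b := cos (INR (S (S n)) * t)). field. easy.
Qed.

Lemma is_RInt_sin_mul_chebU_weighted_cauchy_cos (k n : nat) (r : R) :
  1 < Rabs r -> (2 * k <= n)%nat ->
  is_RInt (fun t => sin t * chebU_weighted_cauchy k n r (cos t)) 0 PI
    ((1 - r ^ 2) ^ k / 2 * (cos_kernel_int r n - cos_kernel_int r (S (S n)))).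
Proof.
  intros Hr Hn.
  set (Q := divdiff_pow_one_sub_sq r k).
  assert (Hkernel : is_RInt (fun t => (1 - r ^ 2) ^ k / 2
                                      * (cos_kernel r n t - cos_kernel r (S (S n)) t)) 0 PI
                      ((1 - r ^ 2) ^ k / 2 * (cos_kernel_int r n - cos_kernel_int r (S (S n))))).
  { apply (is_RInt_scal (fun t => cos_kernel r n t - cos_kernel r (S (S n)) t)),
      (is_RInt_minus (cos_kernel r n)); apply is_RInt_cos_kernel, Hr. }
  assert (Hrem : is_RInt (fun t => / 2 * (cos (INR n * t) * Q (cos t))
                                   - / 2 * (cos (INR (S (S n)) * t) * Q (cos t))) 0 PI
                   (/ 2 * 0 - / 2 * 0)).
  { pose proof (poly_deg_lt_divdiff_pow_one_sub_sq r k) as HQ.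
    apply (is_RInt_minus (fun t => / 2 * (cos (INR n * t) * Q (cos t))));
      apply (is_RInt_scal (fun t => cos (INR _ * t) * Q (cos t))),
        (is_RInt_cos_nat_mult_poly_cos (2 * k)); easy || lia. }
  pose proof (is_RInt_plus _ _ _ _ _ _ Hkernel Hrem) as H.
  replace (plus _ (/ 2 * 0 - / 2 * 0)) with
    ((1 - r ^ 2) ^ k / 2 * (cos_kernel_int r n - cos_kernel_int r (S (S n)))) in H
    by (unfold plus; simpl; ring).
  refine (is_RInt_ext _ _ _ _ _ _ H). intros t Ht.
  rewrite Rmin_left, Rmax_right in Ht by (pose proof PI_RGT_0; lra).
  rewrite sin_mul_chebU_weighted_cauchy_cos by (easy || lra).
  unfold plus. simpl. fold Q. field.
Qed.

Theorem mainTheorem10 (m n : nat) (r : R) :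
  (1 <= m)%nat -> (2 * m - 2 <= n)%nat -> 1 < Rabs r ->
  is_RInt (fun s => chebU n s * ((1 - s ^ 2) ^ (m - 1) * sqrt (1 - s ^ 2)) / (s - r))
    (-1) 1
    (PI * (-1) ^ m * (r ^ 2 - 1) ^ (m - 1)
        * (r - Rabs r / r * sqrt (r ^ 2 - 1)) ^ (n + 1)).
Proof.
  intros Hm Hn Hr.
  destruct m as [| k]; [lia |]. replace (S k - 1)%nat with k by lia.
  destruct (inner_root_spec r Hr) as [Hroot Hx].
  apply (is_RInt_cos_subst (chebU_weighted_cauchy k n r)).
  { intros s Hs. now apply continuous_chebU_weighted_cauchy. }
  change (r - Rabs r / r * sqrt (r ^ 2 - 1)) with (inner_root r).
  replace (PI * (-1) ^ S k * (r ^ 2 - 1) ^ k * inner_root r ^ (n + 1))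
    with ((1 - r ^ 2) ^ k / 2 * (cos_kernel_int r n - cos_kernel_int r (S (S n)))).
  - apply is_RInt_sin_mul_chebU_weighted_cauchy_cos; [easy | lia].
  - rewrite (cos_kernel_int_sub_SS r Hr (inner_root r)), Nat.add_1_r by easy.
    replace (1 - r ^ 2) with (-1 * (r ^ 2 - 1)) by ring.
    rewrite Rpow_mult_distr. simpl. field.
Qed.
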